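(* Let $2\le m\le n$, let $R,S$ be complex $m\times n$ matrices and let $|\psi\rangle=|0\rangle\otimes\sum_{j,k}R_{jk}|j\rangle|k\rangle+|1\rangle\otimes\sum_{j,k}S_{jk}|j\rangle|k\rangle\in\mathbb{C}^2\otimes\mathbb{C}^m\otimes\mathbb{C}^n$, with associated matrix pencil $\mathcal{P}=\mu R+\lambda S$. Suppose that there are invertible matrices $B\in GL(m,\mathbb{C})$, $C\in GL(n,\mathbb{C})$ and positive integers $\epsilon,\nu$ such that $B\mathcal{P}C^T=\mathrm{blockdiag}\{L_\epsilon,L_\nu^T,\tilde{\mathcal{P}}\}$ for some (possibly empty) matrix pencil $\tilde{\mathcal{P}}$ of size $(m-\epsilon-\nu-1)\times(n-\epsilon-\nu-1)$. Then $|\psi\rangle$ (and hence its whole SLOCC class $G|\psi\rangle$) lies in the null-cone.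
   Context: $G=SL(2,\mathbb{C})\times SL(m,\mathbb{C})\times SL(n,\mathbb{C})$ acts by $A\otimes B\otimes C$; the null-cone is the set of vectors $|\phi\rangle$ with $0\in\overline{G|\phi\rangle}$ (standard topology). Here $\lambda,\mu$ are formal variables, and $L_\epsilon$ is the $\epsilon\times(\epsilon+1)$ pencil with entries $\lambda$ at positions $(i,i)$ and $\mu$ at positions $(i,i+1)$, $i=1,\dots,\epsilon$, all other entries zero; $L_\nu^T$ is the transpose of $L_\nu$ (size $(\nu+1)\times\nu$). *)

From HB Require Import structures.
From mathcomp Require Import all_boot all_order all_algebra.
From mathcomp Require Import complex.
From mathcomp Require Export reals.
Set Implicit Arguments. Unset Strict Implicit. Unset Printing Implicit Defensive.
Import Order.TTheory GRing.Theory Num.Theory.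
Local Open Scope ring_scope.

(* A vector of C^2 ⊗ C^m ⊗ C^n, given by its coordinates psi i j k. *)
Definition tensor (K : Type) (m n : nat) := 'I_2 -> 'I_m -> 'I_n -> K.

Definition tensor_of (K : Type) (m n : nat) (R S : 'M[K]_(m, n)) : tensor K m n :=
  fun i j k => if i == ord0 then R j k else S j k.

Definition kron_act (K : nzRingType) (m n : nat)
  (A : 'M[K]_2) (B : 'M[K]_m) (C : 'M[K]_n) (psi : tensor K m n) : tensor K m n :=
  fun i j k => \sum_(i0 < 2) \sum_(j0 < m) \sum_(k0 < n)
                 A i i0 * B j j0 * C k k0 * psi i0 j0 k0.

Definition tnorm2 (R : realType) (m n : nat) (psi : tensor R[i] m n) : R[i] :=
  \sum_(i < 2) \sum_(j < m) \sum_(k < n) `|psi i j k| ^+ 2.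

(* psi is in the null-cone of G = SL(2) x SL(m) x SL(n): 0 lies in the closure
   (standard Euclidean topology) of the orbit G psi. *)
Definition in_null_cone (R : realType) (m n : nat) (psi : tensor R[i] m n) : Prop :=
  forall eps : R, 0 < eps ->
    exists (A : 'M[R[i]]_2) (B : 'M[R[i]]_m) (C : 'M[R[i]]_n),
      [/\ \det A = 1, \det B = 1, \det C = 1 &
          tnorm2 (kron_act A B C psi) < Complex (eps ^+ 2) 0].

(* A matrix pencil mu * P.1 + lambda * P.2 (first component: coefficient of mu,
   second: coefficient of lambda). *)
Definition pencil (K : Type) (p q : nat) := ('M[K]_(p, q) * 'M[K]_(p, q))%type.

(* L_eps : eps x (eps+1), lambda at (i,i), mu at (i,i+1) *)
Definition L_pencil (K : nzRingType) (e : nat) : pencil K e e.+1 :=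
  (\matrix_(i < e, j < e.+1) ((j : nat) == i.+1)%:R,
   \matrix_(i < e, j < e.+1) ((j : nat) == i)%:R).

Definition LT_pencil (K : nzRingType) (e : nat) : pencil K e.+1 e :=
  ((L_pencil K e).1^T, (L_pencil K e).2^T).

Definition pencil_of (K : Type) (m n : nat) (R S : 'M[K]_(m, n)) : pencil K m n :=
  (R, S).

Definition pencil_transform (K : nzRingType) (m n : nat)
  (B : 'M[K]_m) (C : 'M[K]_n) (P : pencil K m n) : pencil K m n :=
  (B *m P.1 *m C^T, B *m P.2 *m C^T).

Definition pencil_blockdiag (K : nzRingType) (p1 q1 p2 q2 : nat)
  (P1 : pencil K p1 q1) (P2 : pencil K p2 q2) : pencil K (p1 + p2) (q1 + q2) :=
  (block_mx P1.1 0 0 P2.1, block_mx P1.2 0 0 P2.2).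

Definition pencil_cast (K : Type) (p q p' q' : nat) (e : (p = p') * (q = q'))
  (P : pencil K p q) : pencil K p' q' := (castmx e P.1, castmx e P.2).

From HB Require Import structures.
From mathcomp Require Import all_boot all_order all_algebra.
From mathcomp Require Import complex reals ring.
Set Implicit Arguments.
Unset Strict Implicit.
Unset Printing Implicit Defensive.
Import Order.TTheory GRing.Theory Num.Theory.
Local Open Scope ring_scope.

(* After the change of bases (B, C) the pencil is block diagonal with blocks
   of shapes eps x (eps+1), (nu+1) x nu and p x q.  The one-parameter subgroup
     t |-> (diag(t^a I_eps, t^c I_(nu+1), I_p),
            diag(t^(N-a) I_(eps+1), t^(N-c) I_nu, t^N I_q)),   N = eps+nu+1,
   multiplies every such pencil by t^N, and the weights a = (nu+1)Q,
   c = -eps Q with Q = eps+1+nu+q make both determinants 1: this uses only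
   that L_eps has one row fewer, and L_nu^T one row more, than columns.
   Correcting B and C by diagonal matrices of determinant (det B)^-1 and
   (det C)^-1 puts the whole family into SL(m) x SL(n), and t -> 0 then
   drives the tensor to 0. *)

Lemma kron_act1_tensor_of (K : comNzRingType) m n (B : 'M[K]_m) (C : 'M[K]_n)
    (R S : 'M[K]_(m, n)) i j k :
  kron_act 1%:M B C (tensor_of R S) i j k
  = tensor_of (B *m R *m C^T) (B *m S *m C^T) i j k.
Proof.
have -> : tensor_of (B *m R *m C^T) (B *m S *m C^T) i j k
          = (B *m (if i == ord0 then R else S) *m C^T) j k.
  by rewrite /tensor_of; case: ifP.
rewrite /kron_act (bigD1 i) //= [X in _ + X]big1 ?addr0; last first.
  move=> i0 /negbTE i0i; apply: big1 => j0 _; apply: big1 => k0 _.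
  by rewrite mxE eq_sym i0i mulr0n !mul0r.
rewrite !mxE exchange_big; apply: eq_bigr => j0 _.
rewrite mxE eqxx mulr1n mulr_suml; apply: eq_bigr => k0 _.
by rewrite /tensor_of !mxE mul1r; case: (i == ord0); rewrite mulrAC.
Qed.

Lemma tnorm2_scale (R : realType) m n (phi psi : tensor R[i] m n) (s : R[i]) :
  (forall i j k, phi i j k = s * psi i j k) ->
  tnorm2 phi = `|s| ^+ 2 * tnorm2 psi.
Proof.
move=> phiE; rewrite /tnorm2 mulr_sumr; apply: eq_bigr => i _.
rewrite mulr_sumr; apply: eq_bigr => j _.
rewrite mulr_sumr; apply: eq_bigr => k _.
by rewrite phiE normrM exprMn.
Qed.

Lemma exists_contraction_factor (F : numFieldType) (e T : F) (N : nat) :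
  0 < e -> 0 <= T -> (0 < N)%N -> exists2 t : F, 0 < t & `|t ^+ N| ^+ 2 * T < e.
Proof.
move=> e0 T0 N0; set t := e / (e + T + 1).
have d0 : 0 < e + T + 1 by rewrite -addrA ltr_wpDr // ?ltW // ltr_wpDl.
have t0 : 0 < t by rewrite divr_gt0.
have t1 : t <= 1 by rewrite ler_pdivrMr // mul1r -addrA lerDl addr_ge0.
exists t => //; rewrite ger0_norm ?exprn_ge0 ?ltW // -exprM.
have tN : t ^+ (N * 2) <= t.
  rewrite -(prednK (_ : 0 < N * 2)%N) ?muln_gt0 ?N0 // exprS.
  by rewrite ler_piMr ?exprn_ile1 // ltW.
apply: le_lt_trans (ler_wpM2r T0 tN) _.
rewrite /t mulrAC ltr_pdivrMr // ltr_pM2l //.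
by rewrite -addrA (addrC T) addrA ltrDr addr_gt0.
Qed.

Lemma in_null_cone_of_scaling (R : realType) m n (Rm Sm Rt St : 'M[R[i]]_(m, n))
    (N : nat) :
  (0 < N)%N ->
  (forall t : R[i], 0 < t -> exists (B : 'M_m) (C : 'M_n),
     [/\ \det B = 1, \det C = 1, B *m Rm *m C^T = t ^+ N *: Rt
       & B *m Sm *m C^T = t ^+ N *: St]) ->
  in_null_cone (tensor_of Rm Sm).
Proof.
move=> N0 scaling e e0.
have e20 : 0 < Complex (e ^+ 2) 0 by rewrite -[0]/(Complex 0 0) ltcR exprn_gt0.
have T0 : 0 <= tnorm2 (tensor_of Rt St).
  by do 3 (apply: sumr_ge0 => ? _); rewrite exprn_ge0.
have [t t0 small] := exists_contraction_factor e20 T0 N0.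
have [B [C [detB detC RE SE]]] := scaling t t0.
exists 1%:M, B, C; split => //; first exact: det1.
rewrite (@tnorm2_scale _ _ _ _ (tensor_of Rt St) (t ^+ N)) // => i j k.
by rewrite kron_act1_tensor_of /tensor_of RE SE; case: ifP; rewrite mxE.
Qed.

Lemma det1_left_rescale (K : comUnitRingType) m (j0 : 'I_m) (B : 'M[K]_m) :
  B \in unitmx -> exists D : 'M[K]_m, \det (D *m B) = 1.
Proof.
move=> uB; exists (diag_mx (\row_j (if j == j0 then (\det B)^-1 else 1))).
rewrite det_mulmx det_diag (bigD1 j0) //= mxE eqxx.
by rewrite big1 ?mulr1 ?mulVr // => j /negbTE jj0; rewrite mxE jj0.
Qed.

Definition scalar_blocks3 (K : nzRingType) (p1 p2 p3 : nat) (x1 x2 x3 : K) :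
    'M[K]_(p1 + (p2 + p3)) :=
  block_mx x1%:M 0 0 (block_mx x2%:M 0 0 x3%:M).

Lemma tr_scalar_blocks3 (K : nzRingType) p1 p2 p3 (x1 x2 x3 : K) :
  (scalar_blocks3 p1 p2 p3 x1 x2 x3)^T = scalar_blocks3 p1 p2 p3 x1 x2 x3.
Proof. by rewrite /scalar_blocks3 !tr_block_mx !trmx0 !tr_scalar_mx. Qed.

Lemma det_scalar_blocks3 (K : comNzRingType) p1 p2 p3 (x1 x2 x3 : K) :
  \det (scalar_blocks3 p1 p2 p3 x1 x2 x3) = x1 ^+ p1 * (x2 ^+ p2 * x3 ^+ p3).
Proof. by rewrite /scalar_blocks3 !det_ublock !det_scalar. Qed.

Lemma scalar_blocks3_blockdiag (K : comNzRingType) p1 p2 p3 q1 q2 q3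
    (X : 'M[K]_(p1, q1)) (Y : 'M[K]_(p2, q2)) (Z : 'M[K]_(p3, q3))
    (a1 a2 a3 b1 b2 b3 s : K) :
  a1 * b1 = s -> a2 * b2 = s -> a3 * b3 = s ->
  scalar_blocks3 p1 p2 p3 a1 a2 a3 *m block_mx X 0 0 (block_mx Y 0 0 Z)
    *m scalar_blocks3 q1 q2 q3 b1 b2 b3
  = s *: block_mx X 0 0 (block_mx Y 0 0 Z).
Proof.
move=> h1 h2 h3; rewrite /scalar_blocks3.
do 2 rewrite !mulmx_block !(mulmx0, mul0mx, addr0, add0r).
rewrite !mul_scalar_mx !mul_mx_scalar !scalerA !scale_block_mx !scaler0.
by rewrite ![b1 * _]mulrC ![b2 * _]mulrC ![b3 * _]mulrC h1 h2 h3.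
Qed.

Lemma det_scalar_blocks3_exprz (K : fieldType) p1 p2 p3 (t : K) (z1 z2 z3 : int) :
  t != 0 ->
  \det (scalar_blocks3 p1 p2 p3 (t ^ z1) (t ^ z2) (t ^ z3))
  = t ^ (z1 * p1%:Z + z2 * p2%:Z + z3 * p3%:Z).
Proof.
move=> t0; rewrite det_scalar_blocks3 !exprnP !exprz_exp.
by rewrite mulrA -!expfzDr.
Qed.

Lemma L_blocks_scaling (K : fieldType) (e nu p q : nat) (t : K) : t != 0 ->
  exists (B : 'M[K]_(e + (nu.+1 + p))) (C : 'M[K]_(e.+1 + (nu + q))),
    [/\ \det B = 1, \det C = 1 &
      forall (X : 'M_(e, e.+1)) (Y : 'M_(nu.+1, nu)) (Z : 'M_(p, q)),
        B *m block_mx X 0 0 (block_mx Y 0 0 Z) *m C^T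
        = t ^+ (e + nu).+1 *: block_mx X 0 0 (block_mx Y 0 0 Z)].
Proof.
move=> t0; set N : int := (e + nu).+1; set Q : int := (e.+1 + (nu + q))%N.
exists (scalar_blocks3 _ _ _ (t ^ (nu.+1%:Z * Q)) (t ^ (- e%:Z * Q)) (t ^ 0)).
exists (scalar_blocks3 _ _ _ (t ^ (N - nu.+1%:Z * Q)) (t ^ (N + e%:Z * Q)) (t ^ N)).
split.
- rewrite det_scalar_blocks3_exprz // -(expr0z t); congr (_ ^ _); rewrite /Q; ring.
- rewrite det_scalar_blocks3_exprz // -(expr0z t); congr (_ ^ _); rewrite /N /Q; ring.
- move=> X Y Z; rewrite tr_scalar_blocks3 exprnP.
  by apply: scalar_blocks3_blockdiag; rewrite -expfzDr //; congr (_ ^ _); ring.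
Qed.

Theorem mainTheorem8 (R : realType) (m n : nat) (Rm Sm : 'M[R[i]]_(m, n))
  (hm : (2 <= m)%N) (hmn : (m <= n)%N)
  (B : 'M[R[i]]_m) (C : 'M[R[i]]_n) (eps nu p q : nat)
  (heps : (0 < eps)%N) (hnu : (0 < nu)%N)
  (eqm : (eps + (nu.+1 + p))%N = m) (eqn : (eps.+1 + (nu + q))%N = n)
  (Pt : pencil R[i] p q) :
  B \in unitmx -> C \in unitmx ->
  pencil_transform B C (pencil_of Rm Sm) =
    pencil_cast (eqm, eqn)
      (pencil_blockdiag (L_pencil R[i] eps)
         (pencil_blockdiag (LT_pencil R[i] nu) Pt)) ->
  in_null_cone (tensor_of Rm Sm).
Proof.
subst m n => uB uC.
rewrite /pencil_transform /pencil_cast /pencil_blockdiag /= !castmx_id.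
case=> RE SE.
have [DB detDB] := det1_left_rescale (Ordinal (ltn_addl eps (ltn0Sn (nu + p)))) uB.
have [DC detDC] := det1_left_rescale (ord0 : 'I_(eps + (nu + q)).+1) uC.
apply: (@in_null_cone_of_scaling _ _ _ _ _
  (DB *m B *m Rm *m (DC *m C)^T) (DB *m B *m Sm *m (DC *m C)^T) (eps + nu).+1)
  => // t t0.
have [TB [TC [detTB detTC scaleT]]] := L_blocks_scaling eps nu p q (lt0r_neq0 t0).
have scaleBC M X Y Z : B *m M *m C^T = block_mx X 0 0 (block_mx Y 0 0 Z) ->
    DB *m TB *m B *m M *m (DC *m TC *m C)^T
    = t ^+ (eps + nu).+1 *: (DB *m B *m M *m (DC *m C)^T).
  move=> ME; rewrite [LHS](_ : _ = DB *m (TB *m (B *m M *m C^T) *m TC^T) *m DC^T).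
    by rewrite ME scaleT -ME -scalemxAr -scalemxAl !trmx_mul !mulmxA.
  by rewrite !trmx_mul !mulmxA.
exists (DB *m TB *m B), (DC *m TC *m C); split.
- by rewrite !det_mulmx detTB mulr1 -det_mulmx detDB.
- by rewrite !det_mulmx detTC mulr1 -det_mulmx detDC.
- exact: scaleBC RE.
- exact: scaleBC SE.
Qed.
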